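(* Let $q>1$, $p=\frac{q}{q-1}$, and assume Hypothesis (H$_q$). Then for every $\theta>0$, $$\Big|f\Big(\frac{m(a+b)}{2}\Big)-\frac{\Gamma(\theta+1)2^{\theta-1}}{m^\theta(b-a)^\theta}\Big[J^\theta_{(\frac{m(a+b)}{2})^-}f(ma)+J^\theta_{(\frac{m(a+b)}{2})^+}f(mb)\Big]\Big|$$ $$\le\frac{m(b-a)}{4}\Big(\frac{1}{\theta p+1}\Big)^{\frac1p}\Big\{\Big(\frac{|f'(\frac{m(a+b)}2)|^q+\alpha m|f'(a)|^q}{\alpha+1}\Big)^{\frac1q}+\Big(\frac{|f'(\frac{m(a+b)}2)|^q+\alpha m|f'(b)|^q}{\alpha+1}\Big)^{\frac1q}\Big\}.$$
   Context: Let $\Gamma$ denote Euler's Gamma function. For $\theta>0$, $c=\frac{m(a+b)}{2}$: $J^\theta_{c^-}f(ma)=\frac{1}{\Gamma(\theta)}\int_{ma}^{c}(s-ma)^{\theta-1}f(s)\,ds$ and $J^\theta_{c^+}f(mb)=\frac{1}{\Gamma(\theta)}\int_{c}^{mb}(mb-s)^{\theta-1}f(s)\,ds$. $(\alpha,m)$-convexity: for $(\alpha,m)\in[0,1]\times(0,1]$ and an interval $K\subseteq[0,\infty)$, a function $g:K\to\mathbb{R}$ is $(\alpha,m)$-convex on $K$ if $g(tX+m(1-t)Y)\le t^\alpha g(X)+m(1-t^\alpha)g(Y)$ for all $X,Y\in K$ and $t\in[0,1]$ with $tX+m(1-t)Y\in K$ (convention $0^0=1$). Hypothesis (H$_q$):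 $I\subseteq[0,\infty)$ is an interval, $f:I\to\mathbb{R}$ is differentiable on the interior $I^\circ$, $m\in(0,1]$, $\alpha\in[0,1]$, $a<b$ with $ma,b\in I^\circ$, $f'$ is Lebesgue integrable on $[ma,mb]$, and $|f'|^q$ is $(\alpha,m)$-convex on $[ma,b]$. *)

From Stdlib Require Import Reals Lra ClassicalEpsilon.
Open Scope R_scope.

(* Real power with the convention 0^0 = 1 and 0^s = 0 for s <> 0;
   for x > 0 this is exp (s * ln x). Only used with nonnegative bases. *)
Definition rpow (x s : R) : R :=
  if Req_EM_T x 0 then (if Req_EM_T s 0 then 1 else 0) else Rpower x s.

Definition is_interval (I : R -> Prop) : Prop :=
  forall x y z, I x -> I z -> x <= y <= z -> I y.

Definition am_convex (alpha m : R) (K : R -> Prop) (g : R -> R) : Prop :=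
  forall X Y t, K X -> K Y -> 0 <= t <= 1 -> K (t * X + m * (1 - t) * Y) ->
    g (t * X + m * (1 - t) * Y) <= rpow t alpha * g X + m * (1 - rpow t alpha) * g Y.

(* Improper Riemann integral over (u, v], possibly singular at u:
   l = lim_{e -> 0+} int_{u+e}^{v} h *)
Definition is_imp_lo (h : R -> R) (u v l : R) : Prop :=
  (forall e, 0 < e < v - u -> inhabited (Riemann_integrable h (u + e) v)) /\
  forall eps, 0 < eps -> exists delta, 0 < delta /\
    forall e (pr : Riemann_integrable h (u + e) v),
      0 < e < delta -> e < v - u -> Rabs (RiemannInt pr - l) < eps.

(* Improper Riemann integral over [u, v), possibly singular at v *)
Definition is_imp_hi (h : R -> R) (u v l : R) : Prop :=
  (forall e, 0 < e < v - u -> inhabited (Riemann_integrable h u (v - e))) /\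
  forall eps, 0 < eps -> exists delta, 0 < delta /\
    forall e (pr : Riemann_integrable h u (v - e)),
      0 < e < delta -> e < v - u -> Rabs (RiemannInt pr - l) < eps.

(* Improper Riemann integral over (0, +oo) *)
Definition is_imp_0_inf (h : R -> R) (l : R) : Prop :=
  (forall e T, 0 < e <= T -> inhabited (Riemann_integrable h e T)) /\
  forall eps, 0 < eps -> exists delta M, 0 < delta /\
    forall e T (pr : Riemann_integrable h e T),
      0 < e < delta -> M < T -> e <= T -> Rabs (RiemannInt pr - l) < eps.

Definition imp_lo (h : R -> R) (u v : R) : R :=
  epsilon (inhabits 0) (fun l => is_imp_lo h u v l).
Definition imp_hi (h : R -> R) (u v : R) : R :=
  epsilon (inhabits 0) (fun l => is_imp_hi h u v l).

Definition Gamma (th : R) : R :=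
  epsilon (inhabits 0) (fun l => is_imp_0_inf (fun t => rpow t (th - 1) * exp (- t)) l).

(* Riemann-Liouville fractional integrals:
   J^th_{c-} f(u) = 1/Gamma th * int_u^c (s-u)^(th-1) f s ds
   J^th_{c+} f(v) = 1/Gamma th * int_c^v (v-s)^(th-1) f s ds *)
Definition J_left (th : R) (f : R -> R) (c u : R) : R :=
  / Gamma th * imp_lo (fun s => rpow (s - u) (th - 1) * f s) u c.
Definition J_right (th : R) (f : R -> R) (c v : R) : R :=
  / Gamma th * imp_hi (fun s => rpow (v - s) (th - 1) * f s) c v.

From Stdlib Require Import Reals Lra ClassicalEpsilon Classical.
From Coquelicot Require Import Coquelicot.
Open Scope R_scope.

(* Put c = m (a + b) / 2 and d = c - m a = m b - c. The proof treats the two halves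
   [m a, c] and [c, m b] separately; the right half is reflected onto a left half by
   s |-> c + m b - s. On a half [u, c], integration by parts gives
     theta int_u^c (s - u)^(theta-1) F s ds = d^theta F c - int_u^c (s - u)^theta F' s ds,
   and the last integral is bounded, via Young's inequality with a free parameter l and the
   (alpha, m)-convexity of |F'|^q, by an explicit function of l. Optimising over l yields the
   Hölder-type bound d^(theta+1) (1/(theta p + 1))^(1/p) ((|f' c|^q + alpha m B)/(alpha + 1))^(1/q),
   with B = |f' a|^q on the left half and B = |f' b|^q on the right half.
   Since f' is not assumed integrable, the integral of (s - u)^theta F' is never formed: a
   mean-value comparison with a primitive of the majorant replaces it. Averaging the two
   halves and using Gamma (theta + 1) = theta Gamma theta gives the theorem. *)

Lemma Rpower_pos x s : 0 < Rpower x s.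
Proof. unfold Rpower; apply exp_pos. Qed.

Lemma rpow_of_pos x s : 0 < x -> rpow x s = Rpower x s.
Proof. intro H. unfold rpow. destruct (Req_EM_T x 0); [lra|reflexivity]. Qed.

Lemma rpow_zero s : s <> 0 -> rpow 0 s = 0.
Proof.
  intro H. unfold rpow. destruct (Req_EM_T 0 0) as [_|N]; [|lra].
  destruct (Req_EM_T s 0); [lra|reflexivity].
Qed.

Lemma rpow_nonneg x s : 0 <= rpow x s.
Proof.
  unfold rpow. destruct (Req_EM_T x 0); [destruct (Req_EM_T s 0); lra|].
  left; apply Rpower_pos.
Qed.

Lemma rpow_mult_l x y s : 0 < x -> 0 <= y -> s <> 0 -> rpow (x * y) s = Rpower x s * rpow y s.
Proof.
  intros Hx Hy Hs. destruct (Req_dec y 0) as [-> | N].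
  - rewrite Rmult_0_r, !rpow_zero by auto. ring.
  - rewrite !rpow_of_pos by nra. rewrite Rpower_mult_distr by lra. reflexivity.
Qed.

Lemma Rpower_one_base s : Rpower 1 s = 1.
Proof. unfold Rpower. rewrite ln_1, Rmult_0_r. apply exp_0. Qed.

Lemma Rpower_pred y s : 0 < y -> Rpower y (s - 1) = Rpower y s / y.
Proof.
  intro H. unfold Rpower. replace ((s - 1) * ln y) with (s * ln y + - ln y) by ring.
  rewrite exp_plus, exp_Ropp, exp_ln by lra. reflexivity.
Qed.

Lemma Rpower_div z l s : 0 < z -> 0 < l -> Rpower (z / l) s = Rpower z s / Rpower l s.
Proof.
  intros. unfold Rpower. rewrite ln_div by lra. unfold Rdiv.
  rewrite <- exp_Ropp, <- exp_plus. f_equal. ring.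
Qed.

Lemma Rpower_small th eps : 0 < th -> 0 < eps ->
  exists d, 0 < d /\ forall e, 0 < e < d -> Rpower e th < eps.
Proof.
  intros Ht He. exists (Rpower eps (/ th)). split; [apply Rpower_pos|].
  intros e [H1 H2]. replace eps with (Rpower (Rpower eps (/ th)) th) at 1.
  - apply Rlt_Rpower_l; lra.
  - rewrite Rpower_mult. replace (/ th * th) with 1 by (field; lra). apply Rpower_1; lra.
Qed.

Lemma exp_monotone x y : x <= y -> exp x <= exp y.
Proof.
  intro H. destruct (Rle_lt_or_eq_dec x y H) as [H1| ->]; [left; apply exp_increasing|]; lra.
Qed.

Lemma Rpower_le_exp_half s : exists C, forall t, 1 <= t -> Rpower t s <= exp (t / 2 + C).
Proof.
  set (k := Rabs s + 1). assert (Hk : 0 < k) by (unfold k; assert (H := Rabs_pos s); lra).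
  exists (k * (ln (2 * k) - 1)). intros t Ht. unfold Rpower. apply exp_monotone.
  assert (L0 : 0 <= ln t) by (rewrite <- ln_1; apply ln_le; lra).
  assert (L1 : s * ln t <= k * ln t).
  { apply Rmult_le_compat_r; auto. unfold k. assert (H := Rle_abs s). lra. }
  assert (L2 : ln t = ln (t / (2 * k)) + ln (2 * k)).
  { rewrite <- ln_mult by (try apply Rdiv_lt_0_compat; lra). f_equal. field. lra. }
  assert (L3 : ln (t / (2 * k)) <= t / (2 * k) - 1).
  { assert (H := exp_ineq1_le (ln (t / (2 * k)))).
    rewrite exp_ln in H by (apply Rdiv_lt_0_compat; lra). lra. }
  assert (L4 : k * ln t <= k * (t / (2 * k) - 1 + ln (2 * k))).
  { rewrite L2; apply Rmult_le_compat_l; lra. }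
  replace (k * (t / (2 * k) - 1 + ln (2 * k))) with (t / 2 + k * (ln (2 * k) - 1)) in L4
    by (field; lra).
  lra.
Qed.

Lemma continuity_of_derivative f x l : derivable_pt_lim f x l -> continuity_pt f x.
Proof. intro H. apply derivable_continuous_pt. exists l; exact H. Qed.

Lemma derivable_pt_lim_eq f x l l' : derivable_pt_lim f x l -> l = l' -> derivable_pt_lim f x l'.
Proof. intros H ->; exact H. Qed.

Lemma Rpower_derive s x : 0 < x -> derivable_pt_lim (fun t => Rpower t s) x (s * Rpower x (s - 1)).
Proof. apply derivable_pt_lim_power. Qed.

Lemma Rpower_scaled_derive u D s x : 0 < D -> u < x ->
  derivable_pt_lim (fun t => Rpower ((t - u) / D) s) x (s * Rpower ((x - u) / D) (s - 1) / D).
Proof.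
  intros HD Hx.
  eapply derivable_pt_lim_eq.
  - apply (derivable_pt_lim_comp (fun t => (t - u) / D) (fun y => Rpower y s) x (/ D)).
    + apply is_derive_Reals. auto_derive; auto. change RinvImpl.Rinv with Rinv. field. lra.
    + apply Rpower_derive. apply Rdiv_lt_0_compat; lra.
  - field. lra.
Qed.

Lemma Rpower_shift_derive u s x : u < x ->
  derivable_pt_lim (fun t => Rpower (t - u) s) x (s * Rpower (x - u) (s - 1)).
Proof.
  intro H. eapply derivable_pt_lim_eq.
  - apply (derivable_pt_lim_comp (fun t => t - u) (fun y => Rpower y s) x 1).
    + apply is_derive_Reals. auto_derive; auto; ring.
    + apply Rpower_derive. lra.
  - ring.
Qed.

Lemma exp_opp_derive x : derivable_pt_lim (fun t => exp (- t)) x (- exp (- x)).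
Proof. apply is_derive_Reals. auto_derive; auto. ring. Qed.

(* If [|P'| <= K'] on [[a, b]], then [|P b - P a| <= K b - K a]: the comparison
   principle used in place of integrating [|P'|], which need not be integrable. *)
Lemma derivative_comparison (P K p k : R -> R) (a b : R) : a <= b ->
  (forall x, a <= x <= b -> derivable_pt_lim P x (p x)) ->
  (forall x, a <= x <= b -> derivable_pt_lim K x (k x)) ->
  (forall x, a <= x <= b -> Rabs (p x) <= k x) ->
  Rabs (P b - P a) <= K b - K a.
Proof.
  intros Hab HP HK Hb.
  assert (Hm : Rmin a b = a) by (apply Rmin_left; lra).
  assert (HM : Rmax a b = b) by (apply Rmax_right; lra).
  destruct (MVT_gen (fun x => P x - K x) a b (fun x => p x - k x)) as [c1 [Hc1 E1]].
  { intros x Hx. rewrite Hm, HM in Hx. apply is_derive_Reals.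
    apply derivable_pt_lim_minus; [apply HP|apply HK]; lra. }
  { intros x Hx. rewrite Hm, HM in Hx.
    apply continuity_pt_minus; eapply continuity_of_derivative; [apply HP|apply HK]; lra. }
  destruct (MVT_gen (fun x => P x + K x) a b (fun x => p x + k x)) as [c2 [Hc2 E2]].
  { intros x Hx. rewrite Hm, HM in Hx. apply is_derive_Reals.
    apply derivable_pt_lim_plus; [apply HP|apply HK]; lra. }
  { intros x Hx. rewrite Hm, HM in Hx.
    apply continuity_pt_plus; eapply continuity_of_derivative; [apply HP|apply HK]; lra. }
  rewrite Hm, HM in Hc1, Hc2. simpl in E1, E2.
  assert (B1 := Hb c1 Hc1). assert (B2 := Hb c2 Hc2).
  assert (S1 : (p c1 - k c1) * (b - a) <= 0) by (apply Rmult_le_0_r; [split_Rabs|]; lra).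
  assert (S2 : 0 <= (p c2 + k c2) * (b - a)) by (apply Rmult_le_pos; [split_Rabs|]; lra).
  split_Rabs; lra.
Qed.

(** Young's inequality, with an optimisable parameter. *)

Lemma Rpower_bernoulli x s : 0 < x -> 0 < s < 1 -> Rpower x s <= s * x + 1 - s.
Proof.
  intros Hx Hs.
  set (h := fun y => s * y + 1 - s - Rpower y s).
  assert (D : forall y, 0 < y -> derivable_pt_lim h y (s - s * Rpower y (s - 1))).
  { intros y Hy. unfold h. eapply derivable_pt_lim_eq.
    - apply derivable_pt_lim_minus; [|apply Rpower_derive; auto].
      apply derivable_pt_lim_minus; [|apply derivable_pt_lim_const].
      apply derivable_pt_lim_plus; [|apply derivable_pt_lim_const].
      apply derivable_pt_lim_scal, derivable_pt_lim_id.
    - ring. }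
  assert (Hmin : 0 < Rmin 1 x) by (apply Rmin_glb_lt; lra).
  destruct (MVT_gen h 1 x (fun y => s - s * Rpower y (s - 1))) as [xi [Hxi E]].
  - intros y Hy. apply is_derive_Reals, D. lra.
  - intros y Hy. eapply continuity_of_derivative, D. lra.
  - unfold h at 2 in E. rewrite Rpower_one_base in E. cbv beta in E.
    assert (Hxi0 : 0 < xi) by lra.
    assert (Hsign : 0 <= (s - s * Rpower xi (s - 1)) * (x - 1)).
    { unfold Rpower. destruct (Rle_lt_dec 1 x) as [Hle|Hlt].
      - rewrite Rmin_left, Rmax_right in Hxi by lra.
        assert (0 <= ln xi) by (rewrite <- ln_1; apply ln_le; lra).
        assert (exp ((s - 1) * ln xi) <= exp 0) by (apply exp_monotone; nra).
        rewrite exp_0 in *.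
        apply Rmult_le_pos; nra.
      - rewrite Rmin_right, Rmax_left in Hxi by lra.
        assert (ln xi <= 0) by (rewrite <- ln_1; apply ln_le; lra).
        assert (exp 0 <= exp ((s - 1) * ln xi)) by (apply exp_monotone; nra).
        rewrite exp_0 in *.
        assert (s - s * exp ((s - 1) * ln xi) <= 0) by nra.
        nra. }
    unfold h in E. lra.
Qed.

Lemma weighted_amgm X Y s : 0 < X -> 0 < Y -> 0 < s < 1 ->
  Rpower X s * Rpower Y (1 - s) <= s * X + (1 - s) * Y.
Proof.
  intros HX HY Hs.
  assert (B := Rpower_bernoulli (X / Y) s ltac:(apply Rdiv_lt_0_compat; lra) Hs).
  assert (E : Rpower X s * Rpower Y (1 - s) = Y * Rpower (X / Y) s).
  { unfold Rpower. rewrite ln_div by lra. rewrite <- exp_plus.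
    replace (s * ln X + (1 - s) * ln Y) with (ln Y + s * (ln X - ln Y)) by ring.
    rewrite exp_plus, exp_ln by lra. reflexivity. }
  rewrite E. apply Rle_trans with (Y * (s * (X / Y) + 1 - s)).
  - apply Rmult_le_compat_l; lra.
  - right. field. lra.
Qed.

Lemma young a b p q : 0 < a -> 0 <= b -> 1 < p -> 1 < q -> 1 / p + 1 / q = 1 ->
  a * b <= Rpower a p / p + rpow b q / q.
Proof.
  intros Ha Hb Hp Hq Hpq.
  assert (0 < Rpower a p / p) by (apply Rdiv_lt_0_compat; [apply Rpower_pos|lra]).
  assert (0 <= rpow b q / q) by (apply Rdiv_le_0_compat; [apply rpow_nonneg|lra]).
  destruct (Req_dec b 0) as [-> | N]; [rewrite Rmult_0_r; lra|].
  rewrite rpow_of_pos by lra.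
  assert (Hs : 0 < 1 / p < 1).
  { split; [apply Rdiv_lt_0_compat; lra|].
    apply (Rmult_lt_reg_r p); [lra|]. unfold Rdiv. field_simplify; lra. }
  assert (A := weighted_amgm (Rpower a p) (Rpower b q) (1 / p)
                 ltac:(apply Rpower_pos) ltac:(apply Rpower_pos) Hs).
  rewrite !Rpower_mult in A.
  replace (1 - 1 / p) with (1 / q) in A by lra.
  replace (p * (1 / p)) with 1 in A by (field; lra).
  replace (q * (1 / q)) with 1 in A by (field; lra).
  rewrite !Rpower_1 in A by lra.
  unfold Rdiv in *. lra.
Qed.

Lemma young_scaled w z l p q : 0 < w -> 0 <= z -> 0 < l -> 1 < p -> 1 < q -> 1 / p + 1 / q = 1 ->
  w * z <= Rpower l p * Rpower w p / p + rpow z q / (q * Rpower l q).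
Proof.
  intros Hw Hz Hl Hp Hq Hpq.
  assert (Y := young (l * w) (z / l) p q ltac:(apply Rmult_lt_0_compat; lra)
                 ltac:(apply Rdiv_le_0_compat; lra) Hp Hq Hpq).
  replace (l * w * (z / l)) with (w * z) in Y by (field; lra).
  rewrite <- Rpower_mult_distr in Y by lra.
  assert (0 < Rpower l q) by apply Rpower_pos.
  destruct (Req_dec z 0) as [-> | N].
  - replace (0 / l) with 0 in Y by (field; lra). rewrite !rpow_zero in * by lra.
    unfold Rdiv in *. rewrite Rmult_0_l in *. lra.
  - rewrite !rpow_of_pos in * by (try apply Rdiv_lt_0_compat; lra).
    rewrite Rpower_div in Y by lra.
    replace (Rpower z q / Rpower l q / q) with (Rpower z q / (q * Rpower l q)) in Y by (field; lra).
    exact Y.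
Qed.

(* The bound of [young_scaled] is minimised at [l = (Q/P)^(1/(p+q))], where it equals
   [P^(1/p) Q^(1/q)]. *)
Lemma young_scaled_optimum P Q p q : 0 < P -> 0 < Q -> 1 < p -> 1 < q -> 1 / p + 1 / q = 1 ->
  Rpower (Q / P) (1 / q) * P / p + Q / (q * Rpower (Q / P) (1 / p))
  = Rpower P (1 / p) * Rpower Q (1 / q).
Proof.
  intros HP HQ Hp Hq Hpq. unfold Rpower. rewrite ln_div by lra.
  transitivity (exp (1 / q * (ln Q - ln P)) * exp (ln P) / p
                + exp (ln Q) / (q * exp (1 / p * (ln Q - ln P)))).
  { rewrite !exp_ln by lra. reflexivity. }
  generalize (ln P) (ln Q). intros x y.
  set (g := 1 / p * x + 1 / q * y).
  assert (E1 : exp (1 / q * (y - x)) * exp x = exp g).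
  { rewrite <- exp_plus. f_equal. unfold g. replace (1 / p) with (1 - 1 / q) by lra. ring. }
  assert (E2 : exp y = exp g * exp (1 / p * (y - x))).
  { rewrite <- exp_plus. f_equal. unfold g. replace (1 / p) with (1 - 1 / q) by lra. ring. }
  assert (E3 : exp (1 / p * x) * exp (1 / q * y) = exp g) by (rewrite <- exp_plus; reflexivity).
  assert (0 < exp (1 / p * (y - x))) by apply exp_pos.
  rewrite E1, E2, E3.
  transitivity (exp g * (1 / p + 1 / q)); [field; lra|].
  rewrite Hpq. ring.
Qed.

Lemma le_of_young_family Z P Q p q : 0 < P -> 0 <= Q -> 1 < p -> 1 < q -> 1 / p + 1 / q = 1 ->
  (forall l, 0 < l -> Z <= Rpower l p * P / p + Q / (q * Rpower l q)) ->
  Z <= Rpower P (1 / p) * rpow Q (1 / q).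
Proof.
  intros HP HQ Hp Hq Hpq H.
  destruct (Req_dec Q 0) as [-> | N].
  - rewrite rpow_zero by (assert (0 < 1 / q) by (apply Rdiv_lt_0_compat; lra); lra).
    rewrite Rmult_0_r. apply Rle_plus_epsilon. intros eps Heps.
    set (l := Rpower (eps * p / P) (1 / p)).
    assert (Hl := H l ltac:(apply Rpower_pos)).
    assert (El : Rpower l p = eps * p / P).
    { unfold l. rewrite Rpower_mult. replace (1 / p * p) with 1 by (field; lra).
      apply Rpower_1. apply Rdiv_lt_0_compat; nra. }
    assert (0 < Rpower l q) by apply Rpower_pos.
    rewrite El in Hl. replace (eps * p / P * P / p + 0 / (q * Rpower l q)) with eps in Hl
      by (field; lra). lra.
  - rewrite rpow_of_pos by lra.
    assert (Hpq2 : p * q = p + q).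
    { assert (E : (1 / p + 1 / q) * (p * q) = 1 * (p * q)) by (rewrite Hpq; ring).
      replace ((1 / p + 1 / q) * (p * q)) with (q + p) in E by (field; lra). lra. }
    set (l := Rpower (Q / P) (1 / (p + q))).
    assert (Hl := H l ltac:(apply Rpower_pos)).
    unfold l in Hl. rewrite !Rpower_mult in Hl.
    replace (1 / (p + q) * p) with (1 / q) in Hl by (rewrite <- Hpq2; field; lra).
    replace (1 / (p + q) * q) with (1 / p) in Hl by (rewrite <- Hpq2; field; lra).
    rewrite <- young_scaled_optimum by lra. exact Hl.
Qed.

(* Coquelicot's integral lemmas specialised to [R], stated with [*], [-] and [+]
   so that they can be used for rewriting. *)
Lemma RInt_scal_R f a b l : ex_RInt f a b -> RInt (fun x => l * f x) a b = l * RInt f a b.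
Proof. exact (RInt_scal f a b l). Qed.

Lemma ex_RInt_scal_R f a b l : ex_RInt f a b -> ex_RInt (fun x => l * f x) a b.
Proof. exact (ex_RInt_scal f a b l). Qed.

Lemma RInt_minus_R f g a b : ex_RInt f a b -> ex_RInt g a b ->
  RInt (fun x => f x - g x) a b = RInt f a b - RInt g a b.
Proof. exact (RInt_minus f g a b). Qed.

Lemma RInt_Chasles_R f a b c : ex_RInt f a b -> ex_RInt f b c ->
  RInt f a b + RInt f b c = RInt f a c.
Proof. exact (RInt_Chasles f a b c). Qed.

Lemma RInt_ext_R (f g : R -> R) a b : (forall x, Rmin a b < x < Rmax a b -> f x = g x) ->
  RInt f a b = RInt g a b.
Proof. exact (RInt_ext f g a b). Qed.

Lemma ex_RInt_ext_R (f g : R -> R) a b : (forall x, Rmin a b < x < Rmax a b -> f x = g x) ->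
  ex_RInt f a b -> ex_RInt g a b.
Proof. exact (ex_RInt_ext f g a b). Qed.

Lemma ex_RInt_of_continuity (h : R -> R) a b :
  (forall z, Rmin a b <= z <= Rmax a b -> continuity_pt h z) -> ex_RInt h a b.
Proof.
  intro H. apply (@ex_RInt_continuous R_CompleteNormedModule).
  intros z Hz. apply continuity_pt_filterlim. auto.
Qed.

Lemma RInt_of_derivative (F f : R -> R) a b :
  (forall x, Rmin a b <= x <= Rmax a b -> derivable_pt_lim F x (f x)) ->
  (forall x, Rmin a b <= x <= Rmax a b -> continuity_pt f x) ->
  @eq R (RInt f a b) (F b - F a).
Proof.
  intros HD HC. apply is_RInt_unique. apply (@is_RInt_derive R_CompleteNormedModule F f a b).
  - intros x Hx. apply is_derive_Reals. auto.
  - intros x Hx. apply continuity_pt_filterlim. auto.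
Qed.

Lemma exists_below3 x y z : 0 < x -> 0 < y -> 0 < z ->
  exists e, 0 < e /\ e < x /\ e < y /\ e < z.
Proof.
  intros Hx Hy Hz. exists (Rmin x (Rmin y z) / 2).
  assert (H1 := Rmin_l x (Rmin y z)). assert (H2 := Rmin_r x (Rmin y z)).
  assert (H3 := Rmin_l y z). assert (H4 := Rmin_r y z).
  assert (0 < Rmin x (Rmin y z)) by (apply Rmin_glb_lt; [|apply Rmin_glb_lt]; lra).
  lra.
Qed.

Lemma eq_of_common_approx l1 l2 :
  (forall eps, 0 < eps -> exists y, Rabs (y - l1) < eps /\ Rabs (y - l2) < eps) -> l1 = l2.
Proof.
  intro H. destruct (Req_dec l1 l2) as [E|N]; auto. exfalso.
  destruct (H (Rabs (l1 - l2) / 2)) as [y [H1 H2]].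
  - assert (0 < Rabs (l1 - l2)) by (apply Rabs_pos_lt; lra). lra.
  - split_Rabs; lra.
Qed.

Lemma sup_approx (E : R -> Prop) : bound E -> (exists x, E x) ->
  exists l, (forall y, E y -> y <= l) /\ forall eps, 0 < eps -> exists y, E y /\ l - eps < y.
Proof.
  intros Hb Hne. destruct (completeness E Hb Hne) as [l [Hl1 Hl2]].
  exists l. split; [exact Hl1|]. intros eps Heps.
  apply NNPP. intro H. assert (l <= l - eps); [|lra].
  apply Hl2. intros y Ey. apply Rnot_lt_le. intro Hy. apply H. exists y. auto.
Qed.

Lemma decreasing_bounded_limit (J : R -> R) r B : 0 < r ->
  (forall e, 0 < e < r -> J e <= B) ->
  (forall e1 e2, 0 < e1 <= e2 -> e2 < r -> J e2 <= J e1) ->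
  exists l, forall eps, 0 < eps -> exists d, 0 < d /\
    forall e, 0 < e < d -> e < r -> Rabs (J e - l) < eps.
Proof.
  intros Hr HB Hmono.
  destruct (sup_approx (fun y => exists e, 0 < e < r /\ y = J e)) as [l [Hl1 Hl2]].
  - exists B. intros y [e [He ->]]. auto.
  - exists (J (r / 2)), (r / 2). split; [lra|auto].
  - exists l. intros eps Heps. destruct (Hl2 eps Heps) as [y [[e0 [He0 ->]] Hy]].
    exists e0. split; [lra|]. intros e He He'.
    assert (J e0 <= J e) by (apply Hmono; lra).
    assert (J e <= l) by (apply Hl1; exists e; split; [lra|reflexivity]).
    split_Rabs; lra.
Qed.

Lemma is_imp_lo_of_RInt h u v l :
  (forall e, 0 < e < v - u -> ex_RInt h (u + e) v) ->
  (forall eps, 0 < eps -> exists d, 0 < d /\ forall e, 0 < e < d -> e < v - u ->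
      Rabs (RInt h (u + e) v - l) < eps) ->
  is_imp_lo h u v l.
Proof.
  intros H1 H2. split.
  - intros e He. constructor. apply ex_RInt_Reals_0. auto.
  - intros eps Heps. destruct (H2 eps Heps) as [d [Hd Hc]]. exists d. split; auto.
    intros e pr He1 He2. rewrite <- RInt_Reals. auto.
Qed.

Lemma is_imp_hi_of_RInt h u v l :
  (forall e, 0 < e < v - u -> ex_RInt h u (v - e)) ->
  (forall eps, 0 < eps -> exists d, 0 < d /\ forall e, 0 < e < d -> e < v - u ->
      Rabs (RInt h u (v - e) - l) < eps) ->
  is_imp_hi h u v l.
Proof.
  intros H1 H2. split.
  - intros e He. constructor. apply ex_RInt_Reals_0. auto.
  - intros eps Heps. destruct (H2 eps Heps) as [d [Hd Hc]]. exists d. split; auto.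
    intros e pr He1 He2. rewrite <- RInt_Reals. auto.
Qed.

Lemma is_imp_0_inf_of_RInt h l :
  (forall e T, 0 < e <= T -> ex_RInt h e T) ->
  (forall eps, 0 < eps -> exists d M, 0 < d /\ forall e T, 0 < e < d -> M < T -> e <= T ->
     Rabs (RInt h e T - l) < eps) ->
  is_imp_0_inf h l.
Proof.
  intros H1 H2. split.
  - intros e T He. constructor. apply ex_RInt_Reals_0. auto.
  - intros eps Heps. destruct (H2 eps Heps) as [d [M [Hd Hc]]]. exists d, M. split; auto.
    intros e T pr H3 H4 H5. rewrite <- RInt_Reals. auto.
Qed.

Lemma is_imp_lo_unique h u v l1 l2 : u < v -> is_imp_lo h u v l1 -> is_imp_lo h u v l2 -> l1 = l2.
Proof.
  intros Huv [I1 H1] [_ H2]. apply eq_of_common_approx. intros eps Heps.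
  destruct (H1 eps Heps) as [d1 [Hd1 D1]]. destruct (H2 eps Heps) as [d2 [Hd2 D2]].
  destruct (exists_below3 d1 d2 (v - u)) as (e & He & He1 & He2 & He3); try lra.
  destruct (I1 e ltac:(lra)) as [pr]. exists (RiemannInt pr). split; [apply D1|apply D2]; lra.
Qed.

Lemma is_imp_hi_unique h u v l1 l2 : u < v -> is_imp_hi h u v l1 -> is_imp_hi h u v l2 -> l1 = l2.
Proof.
  intros Huv [I1 H1] [_ H2]. apply eq_of_common_approx. intros eps Heps.
  destruct (H1 eps Heps) as [d1 [Hd1 D1]]. destruct (H2 eps Heps) as [d2 [Hd2 D2]].
  destruct (exists_below3 d1 d2 (v - u)) as (e & He & He1 & He2 & He3); try lra.
  destruct (I1 e ltac:(lra)) as [pr]. exists (RiemannInt pr). split; [apply D1|apply D2]; lra.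
Qed.

Lemma is_imp_0_inf_unique h l1 l2 : is_imp_0_inf h l1 -> is_imp_0_inf h l2 -> l1 = l2.
Proof.
  intros [I1 H1] [_ H2]. apply eq_of_common_approx. intros eps Heps.
  destruct (H1 eps Heps) as [d1 [M1 [Hd1 D1]]]. destruct (H2 eps Heps) as [d2 [M2 [Hd2 D2]]].
  destruct (exists_below3 d1 d2 1) as (e & He & He1 & He2 & He3); try lra.
  set (T := Rmax (Rmax M1 M2) 1 + 1).
  assert (X1 := Rmax_l (Rmax M1 M2) 1). assert (X2 := Rmax_r (Rmax M1 M2) 1).
  assert (X3 := Rmax_l M1 M2). assert (X4 := Rmax_r M1 M2).
  destruct (I1 e T ltac:(unfold T; lra)) as [pr].
  exists (RiemannInt pr). split; [apply D1|apply D2]; unfold T; lra.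
Qed.

Lemma imp_lo_value h u v l : u < v -> is_imp_lo h u v l -> imp_lo h u v = l.
Proof.
  intros Huv H. apply (is_imp_lo_unique h u v); auto.
  apply (epsilon_spec (inhabits 0) (fun l => is_imp_lo h u v l)). exists l; exact H.
Qed.

Lemma imp_hi_value h u v l : u < v -> is_imp_hi h u v l -> imp_hi h u v = l.
Proof.
  intros Huv H. apply (is_imp_hi_unique h u v); auto.
  apply (epsilon_spec (inhabits 0) (fun l => is_imp_hi h u v l)). exists l; exact H.
Qed.

Lemma Gamma_value th l : is_imp_0_inf (fun t => rpow t (th - 1) * exp (- t)) l -> Gamma th = l.
Proof.
  intro H. apply (is_imp_0_inf_unique (fun t => rpow t (th - 1) * exp (- t))); auto.
  apply (epsilon_spec (inhabits 0) (fun l => is_imp_0_inf (fun t => rpow t (th - 1) * exp (- t)) l)).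
  exists l; exact H.
Qed.

Lemma is_imp_hi_of_reflection (g h : R -> R) u v l : u < v -> (forall x, g x = h (u + v - x)) ->
  is_imp_lo g u v l -> is_imp_hi h u v l.
Proof.
  intros Huv Hgh [I1 H1].
  assert (key : forall e, 0 < e < v - u ->
            ex_RInt h u (v - e) /\ RInt h u (v - e) = RInt g (u + e) v).
  { intros e He. destruct (I1 e He) as [pr].
    assert (Ex : ex_RInt g (-1 * (v - e) + (u + v)) (-1 * u + (u + v))).
    { replace (-1 * (v - e) + (u + v)) with (u + e) by ring.
      replace (-1 * u + (u + v)) with v by ring. exact (ex_RInt_Reals_1 _ _ _ pr). }
    assert (Eq : forall y, (scal (-1) (g (-1 * y + (u + v))) : R) = - h y).
    { intro y. rewrite Hgh. replace (u + v - (-1 * y + (u + v))) with y by ring.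
      change (-1 * h y = - h y). ring. }
    assert (E1 : ex_RInt (fun y => - h y) (v - e) u).
    { eapply ex_RInt_ext; [intros; apply Eq|]. exact (ex_RInt_comp_lin g (-1) (u + v) _ _ Ex). }
    assert (E2 : ex_RInt h (v - e) u).
    { eapply ex_RInt_ext; [intros; apply Ropp_involutive|]. exact (ex_RInt_opp _ _ _ E1). }
    split; [apply ex_RInt_swap; exact E2|].
    assert (E3 := RInt_comp_lin g (-1) (u + v) (v - e) u Ex).
    replace (-1 * (v - e) + (u + v)) with (u + e) in E3 by ring.
    replace (-1 * u + (u + v)) with v in E3 by ring.
    rewrite <- E3, (RInt_ext _ (fun y => - h y) (v - e) u) by (intros; apply Eq).
    assert (E4 : RInt (fun y => - h y) (v - e) u = - RInt h (v - e) u) by exact (RInt_opp h _ _ E2).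
    assert (E5 : RInt h u (v - e) = - RInt h (v - e) u) by exact (eq_sym (opp_RInt_swap h _ _ E2)).
    rewrite E4, E5. reflexivity. }
  apply is_imp_hi_of_RInt.
  - intros e He. apply key; auto.
  - intros eps Heps. destruct (H1 eps Heps) as [d [Hd Hc]]. exists d. split; auto.
    intros e He He'. destruct (key e ltac:(lra)) as [_ ->].
    destruct (I1 e ltac:(lra)) as [pr]. rewrite (RInt_Reals _ _ _ pr). apply Hc; auto.
Qed.

(** Euler's Gamma function: [Gamma (s + 1) = s Gamma s] and [Gamma s > 0]. *)

Definition gamma_integrand (s t : R) : R := Rpower t (s - 1) * exp (- t).

Lemma gamma_integrand_pos s t : 0 < gamma_integrand s t.
Proof. apply Rmult_lt_0_compat; [apply Rpower_pos|apply exp_pos]. Qed.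

Lemma gamma_integrand_continuous s t : 0 < t -> continuity_pt (gamma_integrand s) t.
Proof.
  intro H. apply continuity_pt_mult.
  - eapply continuity_of_derivative. apply Rpower_derive. auto.
  - eapply continuity_of_derivative. apply exp_opp_derive.
Qed.

Lemma ex_RInt_gamma_integrand s a b : 0 < a -> 0 < b -> ex_RInt (gamma_integrand s) a b.
Proof.
  intros Ha Hb. apply ex_RInt_of_continuity. intros z Hz.
  assert (0 < Rmin a b) by (apply Rmin_glb_lt; lra).
  apply gamma_integrand_continuous. lra.
Qed.

Lemma gamma_partial_mono s e' e T T' : 0 < e' <= e -> e <= T -> T <= T' ->
  RInt (gamma_integrand s) e T <= RInt (gamma_integrand s) e' T'.
Proof.
  intros H1 H2 H3.
  assert (Pos : forall x y, 0 < x <= y -> 0 <= RInt (gamma_integrand s) x y).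
  { intros x y Hxy. apply RInt_ge_0; [lra|apply ex_RInt_gamma_integrand; lra|].
    intros; left; apply gamma_integrand_pos. }
  rewrite <- (RInt_Chasles_R _ e' e T'), <- (RInt_Chasles_R _ e T T')
    by (apply ex_RInt_gamma_integrand; lra).
  assert (Pos1 := Pos e' e ltac:(lra)). assert (Pos2 := Pos T T' ltac:(lra)). lra.
Qed.

(* Near 0, [gamma_integrand s t <= t^(s-1)], whose integral over [[e, 1]] is at most [1/s]. *)
Lemma gamma_partial_bound_near0 s e : 0 < s -> 0 < e <= 1 -> RInt (gamma_integrand s) e 1 <= 1 / s.
Proof.
  intros Hs He. assert (Hmin : 0 < Rmin e 1) by (apply Rmin_glb_lt; lra).
  apply Rle_trans with (RInt (fun t => Rpower t (s - 1)) e 1).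
  - apply RInt_le; [lra|apply ex_RInt_gamma_integrand; lra| |].
    + apply ex_RInt_of_continuity. intros z Hz.
      eapply continuity_of_derivative. apply Rpower_derive. lra.
    + intros x Hx. unfold gamma_integrand. assert (0 < Rpower x (s - 1)) by apply Rpower_pos.
      assert (exp (- x) <= exp 0) by (apply exp_monotone; lra). rewrite exp_0 in *. nra.
  - rewrite (RInt_of_derivative (fun t => / s * Rpower t s)).
    + rewrite Rpower_one_base. assert (0 < Rpower e s) by apply Rpower_pos.
      assert (0 < / s) by (apply Rinv_0_lt_compat; lra). unfold Rdiv. nra.
    + intros x Hx. eapply derivable_pt_lim_eq; [apply derivable_pt_lim_scal, Rpower_derive; lra|].
      unfold Rdiv. field. lra.
    + intros x Hx. eapply continuity_of_derivative. apply Rpower_derive. lra.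
Qed.

(* Near [+oo], [gamma_integrand s t <= exp (C - t/2)] for some [C]. *)
Lemma gamma_partial_bound_near_infinity s :
  exists B, forall T, 1 <= T -> RInt (gamma_integrand s) 1 T <= B.
Proof.
  destruct (Rpower_le_exp_half (s - 1)) as [C HC].
  set (majorant := fun t => exp (C - t / 2)).
  assert (Dm : forall x, derivable_pt_lim (fun t => -2 * majorant t) x (majorant x)).
  { intro x. unfold majorant. apply is_derive_Reals. auto_derive; auto.
    replace (C - x / 2) with (C + - (x * / 2)) by reflexivity. field. }
  assert (Cm : forall x, continuity_pt majorant x).
  { intro x. apply (continuity_pt_ext (fun t => -2 * majorant t * / -2)); [intro; field|].
    apply continuity_pt_mult; [eapply continuity_of_derivative, Dm|apply continuity_pt_const].
    intros ? ?; reflexivity. }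
  exists (2 * exp (C - 1 / 2)). intros T HT.
  apply Rle_trans with (RInt majorant 1 T).
  - apply RInt_le; [lra|apply ex_RInt_gamma_integrand; lra|apply ex_RInt_of_continuity; auto|].
    intros x Hx. unfold gamma_integrand, majorant. assert (H1 := HC x ltac:(lra)).
    assert (0 < exp (- x)) by apply exp_pos.
    apply Rle_trans with (exp (x / 2 + C) * exp (- x)); [apply Rmult_le_compat_r; lra|].
    rewrite <- exp_plus. right. f_equal. field.
  - rewrite (RInt_of_derivative (fun t => -2 * majorant t)); auto.
    unfold majorant. assert (0 < exp (C - T / 2)) by apply exp_pos. lra.
Qed.

Lemma gamma_partial_bounded s : 0 < s ->
  exists B, forall e T, 0 < e <= T -> RInt (gamma_integrand s) e T <= B.
Proof.
  intro Hs. destruct (gamma_partial_bound_near_infinity s) as [B HB].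
  exists (1 / s + B). intros e T He.
  set (e' := Rmin e 1). set (T' := Rmax T 1).
  assert (E1 : 0 < e' <= e /\ e' <= 1).
  { unfold e'. split; [split; [apply Rmin_glb_lt; lra|apply Rmin_l]|apply Rmin_r]. }
  assert (E2 : T <= T' /\ 1 <= T') by (unfold T'; split; [apply Rmax_l|apply Rmax_r]).
  apply Rle_trans with (RInt (gamma_integrand s) e' T'); [apply gamma_partial_mono; lra|].
  rewrite <- (RInt_Chasles_R _ e' 1 T') by (apply ex_RInt_gamma_integrand; lra).
  assert (B0 := gamma_partial_bound_near0 s e' Hs ltac:(lra)).
  assert (B1 := HB T' ltac:(lra)). lra.
Qed.

(* The partial integrals converge, to their supremum, as [e -> 0+] and [T -> +oo]. *)
Lemma gamma_partial_limit s : 0 < s -> exists l, 0 < l /\ forall eps, 0 < eps ->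
  exists d M, 0 < d /\ forall e T, 0 < e < d -> M < T -> e <= T ->
    Rabs (RInt (gamma_integrand s) e T - l) < eps.
Proof.
  intro Hs. destruct (gamma_partial_bounded s Hs) as [B HB].
  destruct (sup_approx (fun y => exists e T, 0 < e <= T /\ y = RInt (gamma_integrand s) e T))
    as [l [Hl1 Hl2]].
  - exists B. intros y (e & T & H & ->). auto.
  - exists (RInt (gamma_integrand s) 1 2), 1, 2. split; [lra|auto].
  - exists l. split.
    + apply Rlt_le_trans with (RInt (gamma_integrand s) 1 2).
      * assert (Z : RInt (fun _ : R => 0) 1 2 = 0) by (rewrite RInt_const; apply Rmult_0_r).
        rewrite <- Z. apply RInt_lt; [lra| | |].
        -- intros x Hx. apply continuity_pt_filterlim, gamma_integrand_continuous. lra.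
        -- intros x Hx. apply continuity_pt_filterlim, continuity_pt_const. intros ? ?; reflexivity.
        -- intros x Hx. apply gamma_integrand_pos.
      * apply Hl1. exists 1, 2. split; [lra|auto].
    + intros eps Heps. destruct (Hl2 eps Heps) as [y [(e0 & T0 & H0 & ->) Hy]].
      exists e0, T0. split; [lra|]. intros e T He HT HeT.
      assert (RInt (gamma_integrand s) e0 T0 <= RInt (gamma_integrand s) e T)
        by (apply gamma_partial_mono; lra).
      assert (RInt (gamma_integrand s) e T <= l) by (apply Hl1; exists e, T; split; [lra|auto]).
      split_Rabs; lra.
Qed.

Lemma power_exp_boundary s eps : 0 < s -> 0 < eps -> exists d M, 0 < d /\
  forall e T, 0 < e < d -> M < T ->
    0 <= Rpower e s * exp (- e) < eps /\ 0 <= Rpower T s * exp (- T) < eps.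
Proof.
  intros Hs Heps.
  destruct (Rpower_small s eps Hs Heps) as [d [Hd Hsmall]].
  destruct (Rpower_le_exp_half s) as [C HC].
  exists d, (Rmax 1 (2 * (C - ln eps))). split; [exact Hd|]. intros e T He HT.
  assert (X1 := Rmax_l 1 (2 * (C - ln eps))). assert (X2 := Rmax_r 1 (2 * (C - ln eps))).
  assert (0 < Rpower e s) by apply Rpower_pos. assert (0 < Rpower T s) by apply Rpower_pos.
  assert (0 < exp (- e)) by apply exp_pos. assert (0 < exp (- T)) by apply exp_pos.
  split.
  - assert (Y := Hsmall e He).
    assert (exp (- e) <= exp 0) by (apply exp_monotone; lra). rewrite exp_0 in *.
    split; nra.
  - split; [nra|].
    apply Rle_lt_trans with (exp (T / 2 + C) * exp (- T));
      [apply Rmult_le_compat_r; [lra|apply HC; lra]|].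
    rewrite <- exp_plus, <- (exp_ln eps) by lra. apply exp_increasing. lra.
Qed.

Lemma gamma_partial_by_parts s e T : 0 < e <= T ->
  RInt (gamma_integrand (s + 1)) e T
  = (Rpower e s * exp (- e) - Rpower T s * exp (- T)) + s * RInt (gamma_integrand s) e T.
Proof.
  intros H. assert (Hmin : 0 < Rmin e T) by (apply Rmin_glb_lt; lra).
  assert (Ex1 := ex_RInt_gamma_integrand (s + 1) e T ltac:(lra) ltac:(lra)).
  assert (Ex0 := ex_RInt_gamma_integrand s e T ltac:(lra) ltac:(lra)).
  assert (D : RInt (fun t => gamma_integrand (s + 1) t - s * gamma_integrand s t) e T
              = - Rpower T s * exp (- T) - - Rpower e s * exp (- e)).
  { apply (RInt_of_derivative (fun t => - Rpower t s * exp (- t))).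
    - intros x Hx. eapply derivable_pt_lim_eq.
      + apply (derivable_pt_lim_mult (fun t => - Rpower t s) (fun t => exp (- t))).
        * apply derivable_pt_lim_opp, Rpower_derive. lra.
        * apply exp_opp_derive.
      + unfold gamma_integrand. replace (s + 1 - 1) with s by ring.
        rewrite Rpower_pred by lra. field. lra.
    - intros x Hx. apply continuity_pt_minus.
      + apply gamma_integrand_continuous. lra.
      + apply continuity_pt_scal, gamma_integrand_continuous. lra. }
  rewrite RInt_minus_R, RInt_scal_R in D; auto.
  - lra.
  - exact (ex_RInt_scal_R _ _ _ s Ex0).
Qed.

Lemma is_imp_0_inf_gamma s l :
  (forall eps, 0 < eps -> exists d M, 0 < d /\ forall e T, 0 < e < d -> M < T -> e <= T ->
     Rabs (RInt (gamma_integrand s) e T - l) < eps) ->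
  is_imp_0_inf (fun t => rpow t (s - 1) * exp (- t)) l.
Proof.
  intro Conv.
  assert (E : forall e T x, 0 < e <= T -> Rmin e T < x < Rmax e T ->
            gamma_integrand s x = rpow x (s - 1) * exp (- x)).
  { intros e T x H Hx. assert (0 < Rmin e T) by (apply Rmin_glb_lt; lra).
    unfold gamma_integrand. rewrite rpow_of_pos by lra. reflexivity. }
  apply is_imp_0_inf_of_RInt.
  - intros e T H. eapply ex_RInt_ext_R; [intros x Hx; apply (E e T x H Hx)|].
    apply ex_RInt_gamma_integrand; lra.
  - intros eps Heps. destruct (Conv eps Heps) as [d [M [Hd Hc]]]. exists d, M. split; auto.
    intros e T He HT HeT. rewrite <- (RInt_ext_R (gamma_integrand s)); [apply Hc; auto|].
    intros x Hx. apply (E e T x); auto. lra.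
Qed.

Theorem Gamma_succ s : 0 < s -> Gamma (s + 1) = s * Gamma s /\ 0 < Gamma s.
Proof.
  intro Hs. destruct (gamma_partial_limit s Hs) as [l [Hl Conv]].
  rewrite (Gamma_value s l (is_imp_0_inf_gamma s l Conv)).
  split; [|exact Hl].
  apply Gamma_value, is_imp_0_inf_gamma. intros eps Heps.
  destruct (Conv (eps / (3 * s))) as [d1 [M1 [Hd1 C1]]]; [apply Rdiv_lt_0_compat; lra|].
  destruct (power_exp_boundary s (eps / 3)) as [d2 [M2 [Hd2 C2]]]; [lra|lra|].
  exists (Rmin d1 d2), (Rmax M1 M2). split; [apply Rmin_glb_lt; lra|].
  intros e T He HT HeT.
  assert (X1 := Rmin_l d1 d2). assert (X2 := Rmin_r d1 d2).
  assert (X3 := Rmax_l M1 M2). assert (X4 := Rmax_r M1 M2).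
  rewrite gamma_partial_by_parts by lra.
  destruct (C2 e T ltac:(lra) ltac:(lra)) as [A1 A2].
  assert (A3 : Rabs (s * RInt (gamma_integrand s) e T - s * l) < eps / 3).
  { rewrite <- Rmult_minus_distr_l, Rabs_mult, (Rabs_pos_eq s) by lra.
    apply Rlt_le_trans with (s * (eps / (3 * s))); [apply Rmult_lt_compat_l; [lra|apply C1; lra]|].
    right; field; lra. }
  split_Rabs; lra.
Qed.

(** The weighted integral over a half interval.

   For [F] differentiable on [[u, c']] and [u < c < c'], we study
   [L = int_u^c (s - u)^(th - 1) F s ds], improper at [u] when [th < 1].
   Integrating by parts, [th L = (c - u)^th F c - int_u^c (s - u)^th F' s ds]; since [F']
   need not be integrable, the last integral is never formed: it is only compared, through
   [derivative_comparison], with a primitive [K] of a majorant [k] of [(s - u)^th |F' s|]. *)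

Section WeightedIntegral.

Variables (F F' : R -> R) (u c c' th : R).
Hypotheses (Huc : u < c) (Hcc : c < c') (Hth : 0 < th)
  (HF : forall x, u <= x <= c' -> derivable_pt_lim F x (F' x)).

Let weight := fun x => Rpower (x - u) (th - 1).
Let weighted := fun x => weight x * F x.

Lemma weight_continuous x : u < x -> continuity_pt weight x.
Proof. intro H. eapply continuity_of_derivative. apply Rpower_shift_derive. exact H. Qed.

Lemma weighted_continuous x : u < x <= c' -> continuity_pt weighted x.
Proof.
  intro H. apply continuity_pt_mult; [apply weight_continuous; lra|].
  eapply continuity_of_derivative. apply HF. lra.
Qed.

Lemma ex_RInt_weight a b : u < a -> u < b -> ex_RInt weight a b.
Proof.
  intros. apply ex_RInt_of_continuity. intros z Hz.
  assert (u < Rmin a b) by (apply Rmin_glb_lt; lra). apply weight_continuous. lra.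
Qed.

Lemma ex_RInt_weighted a b : u < a -> u < b -> a <= c' -> b <= c' -> ex_RInt weighted a b.
Proof.
  intros. apply ex_RInt_of_continuity. intros z Hz.
  assert (u < Rmin a b) by (apply Rmin_glb_lt; lra).
  assert (Rmax a b <= c') by (apply Rmax_lub; lra). apply weighted_continuous. lra.
Qed.

Lemma ex_RInt_shifted M a b : u < a -> u < b -> a <= c' -> b <= c' ->
  ex_RInt (fun x => weight x * (F x + M)) a b.
Proof.
  intros. apply ex_RInt_of_continuity. intros z Hz.
  assert (u < Rmin a b) by (apply Rmin_glb_lt; lra).
  assert (Rmax a b <= c') by (apply Rmax_lub; lra).
  apply continuity_pt_mult; [apply weight_continuous; lra|].
  apply continuity_pt_plus; [eapply continuity_of_derivative, HF; lra|].
  apply continuity_pt_const. intros ? ?; reflexivity.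
Qed.

Lemma RInt_weight e : 0 < e < c - u ->
  @eq R (RInt weight (u + e) c) ((Rpower (c - u) th - Rpower e th) / th).
Proof.
  intro He. assert (u < Rmin (u + e) c) by (apply Rmin_glb_lt; lra).
  rewrite (RInt_of_derivative (fun x => / th * Rpower (x - u) th)).
  - replace (u + e - u) with e by ring. field. lra.
  - intros x Hx. eapply derivable_pt_lim_eq.
    + apply derivable_pt_lim_scal, Rpower_shift_derive. lra.
    + unfold weight. field. lra.
  - intros x Hx. apply weight_continuous. lra.
Qed.

Lemma F_bounded : exists M, 0 <= M /\ forall x, u <= x <= c -> Rabs (F x) <= M.
Proof.
  destruct (continuity_ab_maj (fun x => Rabs (F x)) u c) as [x0 [H1 H2]]; [lra| |].
  - intros x Hx. apply (continuity_pt_comp F Rabs); [|apply Rcontinuity_abs].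
    eapply continuity_of_derivative. apply HF. lra.
  - exists (Rabs (F x0)). split; [apply Rabs_pos|exact H1].
Qed.

(* For [M >= |F|], the integrand [weight (F + M)] is nonnegative, so its integral over
   [[u + e, c]] decreases in [e]; it is bounded by [2 M int weight], hence convergent. *)
Lemma shifted_partial_limit M : 0 <= M -> (forall x, u <= x <= c -> Rabs (F x) <= M) ->
  exists l, forall eps, 0 < eps -> exists d, 0 < d /\
    forall e, 0 < e < d -> e < c - u ->
      Rabs (RInt (fun x => weight x * (F x + M)) (u + e) c - l) < eps.
Proof.
  intros HM0 HM. set (g := fun x => weight x * (F x + M)).
  assert (gint := ex_RInt_shifted M).
  apply (decreasing_bounded_limit (fun e => RInt g (u + e) c) (c - u)
           (2 * M * (Rpower (c - u) th / th)));
    [lra| |].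
  - intros e He. apply Rle_trans with (RInt (fun x => (2 * M) * weight x) (u + e) c).
    + apply RInt_le; [lra|apply gint; lra|apply ex_RInt_scal_R, ex_RInt_weight; lra|].
      intros x Hx. unfold g. assert (0 < weight x) by apply Rpower_pos.
      assert (HMx := HM x ltac:(lra)). assert (F x <= M) by (split_Rabs; lra). nra.
    + rewrite RInt_scal_R, RInt_weight by (try apply ex_RInt_weight; lra).
      assert (0 < Rpower e th) by apply Rpower_pos.
      apply Rmult_le_compat_l; [lra|]. unfold Rdiv.
      apply Rmult_le_compat_r; [left; apply Rinv_0_lt_compat|]; lra.
  - intros e1 e2 H1 H2. rewrite <- (RInt_Chasles_R g (u + e1) (u + e2) c) by (apply gint; lra).
    assert (0 <= RInt g (u + e1) (u + e2)); [|lra].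
    apply RInt_ge_0; [lra|apply gint; lra|]. intros x Hx.
    apply Rmult_le_pos; [left; apply Rpower_pos|].
    assert (HMx := HM x ltac:(lra)). split_Rabs; lra.
Qed.

(* Existence of the limit of [int_(u+e)^c weight F]: subtract [M int_(u+e)^c weight],
   whose limit is explicit. *)
Lemma weighted_partial_limit : exists L, forall eps, 0 < eps -> exists d, 0 < d /\
  forall e, 0 < e < d -> e < c - u -> Rabs (RInt weighted (u + e) c - L) < eps.
Proof.
  destruct F_bounded as [M [HM0 HM]].
  destruct (shifted_partial_limit M HM0 HM) as [l Hl].
  exists (l - M * (Rpower (c - u) th / th)). intros eps Heps.
  destruct (Hl (eps / 2)) as [d1 [Hd1 C1]]; [lra|].
  destruct (Rpower_small th (eps * th / (2 * (M + 1)))) as [d2 [Hd2 Hsmall]]; [lra| |].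
  { apply Rdiv_lt_0_compat; [apply Rmult_lt_0_compat|]; lra. }
  exists (Rmin d1 d2). split; [apply Rmin_glb_lt; lra|].
  intros e He He'. assert (Hm1 := Rmin_l d1 d2). assert (Hm2 := Rmin_r d1 d2).
  assert (Split : RInt weighted (u + e) c
                  = RInt (fun x => weight x * (F x + M)) (u + e) c - M * RInt weight (u + e) c).
  { rewrite <- RInt_scal_R, <- RInt_minus_R.
    - apply RInt_ext_R. intros x Hx. unfold weighted. ring.
    - apply ex_RInt_shifted; lra.
    - apply ex_RInt_scal_R, ex_RInt_weight; lra.
    - apply ex_RInt_weight; lra. }
  rewrite Split, RInt_weight by lra.
  assert (Cl := C1 e ltac:(lra) He').
  assert (S := Hsmall e ltac:(lra)).
  set (R0 := Rpower e th) in *. assert (0 < R0) by apply Rpower_pos.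
  assert (Small : 0 <= M * R0 / th < eps / 2).
  { split; [apply Rdiv_le_0_compat; nra|].
    apply (Rmult_lt_reg_r th); [lra|]. replace (M * R0 / th * th) with (M * R0) by (field; lra).
    apply Rle_lt_trans with ((M + 1) * R0); [nra|].
    apply Rlt_le_trans with ((M + 1) * (eps * th / (2 * (M + 1)))); [apply Rmult_lt_compat_l; lra|].
    right. field. lra. }
  set (J := RInt (fun x => weight x * (F x + M)) (u + e) c) in *.
  replace (J - M * ((Rpower (c - u) th - R0) / th) - (l - M * (Rpower (c - u) th / th)))
    with (J - l + M * R0 / th) by (field; lra).
  split_Rabs; lra.
Qed.

Lemma weighted_eq_integrand e x : 0 < e -> Rmin (u + e) c < x < Rmax (u + e) c ->
  weighted x = rpow (x - u) (th - 1) * F x.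
Proof.
  intros He Hx. assert (u < Rmin (u + e) c) by (apply Rmin_glb_lt; lra).
  unfold weighted, weight. rewrite rpow_of_pos by lra. reflexivity.
Qed.

Lemma weighted_improper_exists : exists L, is_imp_lo (fun s => rpow (s - u) (th - 1) * F s) u c L.
Proof.
  destruct weighted_partial_limit as [L Conv]. exists L. apply is_imp_lo_of_RInt.
  - intros e He. eapply ex_RInt_ext_R; [intros x Hx; apply (weighted_eq_integrand e); lra|].
    apply ex_RInt_weighted; lra.
  - intros eps Heps. destruct (Conv eps Heps) as [d [Hd Hc]]. exists d. split; auto.
    intros e He He'. rewrite <- (RInt_ext_R weighted); [apply Hc; auto|].
    intros x Hx. apply (weighted_eq_integrand e); lra.
Qed.

Variables (K k : R -> R) (K0 : R).
Hypotheses (HK : forall x, u < x <= c -> derivable_pt_lim K x (k x))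
  (Hmaj : forall x, u < x <= c -> Rabs (Rpower (x - u) th * F' x) <= k x)
  (HK0 : forall eps, 0 < eps -> exists d, 0 < d /\ forall e, 0 < e < d -> Rabs (K (u + e) - K0) < eps).

Lemma by_parts_comparison e : 0 < e < c - u ->
  Rabs ((Rpower (c - u) th * F c - th * RInt weighted (u + e) c) - Rpower e th * F (u + e))
  <= K c - K (u + e).
Proof.
  intro He.
  set (Phi := fun s => Rpower (s - u) th * F s - th * RInt weighted (u + e) s).
  assert (E1 : Phi (u + e) = Rpower e th * F (u + e)).
  { unfold Phi. rewrite (RInt_point (u + e) weighted : RInt weighted (u + e) (u + e) = 0).
    replace (u + e - u) with e by ring. ring. }
  rewrite <- E1.
  apply (derivative_comparison Phi K (fun x => Rpower (x - u) th * F' x) k); [lra| | |].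
  - intros x Hx.
    assert (Dint : derivable_pt_lim (fun s => RInt weighted (u + e) s) x (weighted x)).
    { apply is_derive_Reals, (is_derive_RInt weighted (RInt weighted (u + e)) (u + e) x).
      - assert (Hp : 0 < Rmin (x - u) (c' - x)) by (apply Rmin_glb_lt; lra).
        exists (mkposreal _ Hp). intros y Hy. change (Rabs (y - x) < Rmin (x - u) (c' - x)) in Hy.
        assert (H1 := Rmin_l (x - u) (c' - x)). assert (H2 := Rmin_r (x - u) (c' - x)).
        apply (@RInt_correct R_CompleteNormedModule). apply ex_RInt_weighted; split_Rabs; lra.
      - apply continuity_pt_filterlim, weighted_continuous. lra. }
    eapply derivable_pt_lim_eq.
    + apply derivable_pt_lim_minus; [|apply derivable_pt_lim_scal, Dint].
      apply derivable_pt_lim_mult; [apply Rpower_shift_derive; lra|apply HF; lra].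
    + unfold weighted, weight. ring.
  - intros x Hx. apply HK. lra.
  - intros x Hx. apply Hmaj. lra.
Qed.

Lemma weighted_comparison L : is_imp_lo (fun s => rpow (s - u) (th - 1) * F s) u c L ->
  Rabs (Rpower (c - u) th * F c - th * L) <= K c - K0.
Proof.
  intros [I1 HL]. destruct F_bounded as [M [HM0 HM]].
  apply Rle_plus_epsilon. intros eps Heps.
  destruct (HL (eps / (4 * th))) as [d1 [Hd1 C1]]; [apply Rdiv_lt_0_compat; lra|].
  destruct (Rpower_small th (eps / (4 * (M + 1)))) as [d2 [Hd2 C2]];
    [lra|apply Rdiv_lt_0_compat; lra|].
  destruct (HK0 (eps / 4)) as [d3 [Hd3 C3]]; [lra|].
  destruct (exists_below3 d1 (Rmin d2 d3) (c - u)) as (e & He0 & He1 & He2 & He3);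
    [lra|apply Rmin_glb_lt; lra|lra|].
  assert (Hm2 := Rmin_l d2 d3). assert (Hm3 := Rmin_r d2 d3).
  destruct (I1 e ltac:(lra)) as [pr].
  assert (Conv := C1 e pr ltac:(lra) He3).
  rewrite <- RInt_Reals in Conv.
  rewrite <- (RInt_ext_R weighted) in Conv by (intros x Hx; apply (weighted_eq_integrand e); lra).
  specialize (C2 e ltac:(lra)). specialize (C3 e ltac:(lra)).
  assert (B := by_parts_comparison e ltac:(lra)).
  set (I0 := RInt weighted (u + e) c) in *.
  assert (T1 : Rabs (th * I0 - th * L) < eps / 4).
  { rewrite <- Rmult_minus_distr_l, Rabs_mult, (Rabs_pos_eq th) by lra.
    apply Rlt_le_trans with (th * (eps / (4 * th))); [apply Rmult_lt_compat_l; lra|].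
    right; field; lra. }
  assert (T2 : Rabs (Rpower e th * F (u + e)) < eps / 4).
  { assert (0 < Rpower e th) by apply Rpower_pos.
    rewrite Rabs_mult, (Rabs_pos_eq (Rpower e th)) by lra.
    assert (HF1 : Rabs (F (u + e)) <= M) by (apply HM; lra).
    apply Rle_lt_trans with (Rpower e th * (M + 1)); [nra|].
    apply Rlt_le_trans with (eps / (4 * (M + 1)) * (M + 1)); [apply Rmult_lt_compat_r; lra|].
    right; field; lra. }
  split_Rabs; lra.
Qed.

End WeightedIntegral.

(** The Hölder-type estimate of a half interval. *)

Lemma power_combination_small a1 a2 a3 s1 s2 D : 0 < s1 -> 0 < s2 -> 0 < D ->
  forall eps, 0 < eps -> exists d, 0 < d /\ forall e, 0 < e < d ->
    Rabs (a1 * Rpower e s1 + a2 * Rpower (e / D) s2 + a3 * e) < eps.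
Proof.
  intros H1 H2 HD eps Heps.
  set (M := Rabs a1 + Rabs a2 + Rabs a3 + 1).
  assert (X1 := Rabs_pos a1). assert (X2 := Rabs_pos a2). assert (X3 := Rabs_pos a3).
  assert (He3 : 0 < eps / (3 * M)) by (apply Rdiv_lt_0_compat; unfold M; lra).
  assert (Term : forall a y, Rabs a <= M -> 0 <= y < eps / (3 * M) -> Rabs (a * y) < eps / 3).
  { intros a y Ha Hy. rewrite Rabs_mult, (Rabs_pos_eq y) by lra.
    apply Rle_lt_trans with (M * y); [apply Rmult_le_compat_r; lra|].
    replace (eps / 3) with (M * (eps / (3 * M))) by (unfold M; field; lra).
    destruct (Req_dec y 0) as [-> | N]; [unfold M in *; nra|].
    apply Rmult_lt_compat_l; unfold M in *; lra. }
  destruct (Rpower_small s1 (eps / (3 * M)) H1 He3) as [d1 [Hd1 C1]].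
  destruct (Rpower_small s2 (eps / (3 * M)) H2 He3) as [d2 [Hd2 C2]].
  destruct (exists_below3 d1 (D * d2) (eps / (3 * M))) as (d & Hd & Y1 & Y2 & Y3);
    [auto|apply Rmult_lt_0_compat; lra|auto|].
  exists d. split; auto. intros e He.
  assert (Hed : 0 < e / D < d2).
  { split; [apply Rdiv_lt_0_compat; lra|].
    apply (Rmult_lt_reg_r D); [lra|]. unfold Rdiv. rewrite Rmult_assoc, Rinv_l; lra. }
  assert (T1 : Rabs (a1 * Rpower e s1) < eps / 3).
  { apply Term; [unfold M; lra|]. split; [left; apply Rpower_pos|apply C1; lra]. }
  assert (T2 : Rabs (a2 * Rpower (e / D) s2) < eps / 3).
  { apply Term; [unfold M; lra|]. split; [left; apply Rpower_pos|apply C2; lra]. }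
  assert (T3 : Rabs (a3 * e) < eps / 3) by (apply Term; [unfold M|]; lra).
  split_Rabs; lra.
Qed.

(* Along [[u, u + d]], (alpha, m)-convexity bounds [|F'|^q] by the profile
   [t^al A + m (1 - t^al) B], [t = (x - u) / d]. *)
Definition convexity_profile (u d al m A B x : R) : R :=
  Rpower ((x - u) / d) al * A + m * (1 - Rpower ((x - u) / d) al) * B.

(* A primitive of the Young majorant
   [l^p (x - u)^(th p) / p + convexity_profile x / (q l^q)] of [(x - u)^th |F' x|]. *)
Definition young_majorant (u d th p q al m A B l x : R) : R :=
  Rpower l p / (p * (th * p + 1)) * Rpower (x - u) (th * p + 1) +
  / (q * Rpower l q) * ((A - m * B) * d / (al + 1) * Rpower ((x - u) / d) (al + 1) + m * B * (x - u)).

Section YoungMajorant.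

Variables (u d th p q al m A B l : R).
Hypotheses (Hd : 0 < d) (Hth : 0 < th) (Hp : 1 < p) (Hq : 1 < q) (Hal : 0 <= al) (Hl : 0 < l).

Lemma young_majorant_derive x : u < x ->
  derivable_pt_lim (young_majorant u d th p q al m A B l) x
    (Rpower l p * Rpower (x - u) (th * p) / p
     + convexity_profile u d al m A B x / (q * Rpower l q)).
Proof.
  intro Hx. assert (0 < Rpower l q) by apply Rpower_pos.
  unfold young_majorant, convexity_profile. eapply derivable_pt_lim_eq.
  - apply derivable_pt_lim_plus; apply derivable_pt_lim_scal;
      [apply Rpower_shift_derive; lra|].
    apply derivable_pt_lim_plus; apply derivable_pt_lim_scal;
      [apply Rpower_scaled_derive; lra|].
    apply derivable_pt_lim_minus; [apply derivable_pt_lim_id|apply derivable_pt_lim_const].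
  - replace (th * p + 1 - 1) with (th * p) by ring. replace (al + 1 - 1) with al by ring.
    field. repeat split; try lra. nra.
Qed.

Lemma young_majorant_start eps : 0 < eps -> exists d', 0 < d' /\ forall e, 0 < e < d' ->
  Rabs (young_majorant u d th p q al m A B l (u + e) - 0) < eps.
Proof.
  intro Heps.
  destruct (power_combination_small (Rpower l p / (p * (th * p + 1)))
              (/ (q * Rpower l q) * ((A - m * B) * d / (al + 1))) (/ (q * Rpower l q) * (m * B))
              (th * p + 1) (al + 1) d ltac:(nra) ltac:(lra) Hd eps Heps) as [d' [Hd' C]].
  exists d'. split; auto. intros e He. specialize (C e He).
  unfold young_majorant. replace (u + e - u) with e by ring. rewrite Rminus_0_r.
  replace (/ (q * Rpower l q) * ((A - m * B) * d / (al + 1) * Rpower (e / d) (al + 1) + m * B * e))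
    with (/ (q * Rpower l q) * ((A - m * B) * d / (al + 1)) * Rpower (e / d) (al + 1)
          + / (q * Rpower l q) * (m * B) * e) by ring.
  rewrite <- Rplus_assoc. exact C.
Qed.

Lemma young_majorant_end :
  young_majorant u d th p q al m A B l (u + d)
  = Rpower l p * (Rpower d (th * p + 1) / (th * p + 1)) / p
    + d * (A + al * m * B) / (al + 1) / (q * Rpower l q).
Proof.
  assert (0 < Rpower l q) by apply Rpower_pos.
  unfold young_majorant. replace (u + d - u) with d by ring.
  replace (d / d) with 1 by (field; lra). rewrite Rpower_one_base.
  field. repeat split; try lra. nra.
Qed.

Lemma young_majorant_dominates x z : 1 / p + 1 / q = 1 -> u < x -> 0 <= z ->
  rpow z q <= convexity_profile u d al m A B x ->
  Rpower (x - u) th * z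
  <= Rpower l p * Rpower (x - u) (th * p) / p + convexity_profile u d al m A B x / (q * Rpower l q).
Proof.
  intros Hpq Hx Hz Hprof. assert (Hw : 0 < Rpower (x - u) th) by apply Rpower_pos.
  assert (Y := young_scaled (Rpower (x - u) th) z l p q Hw Hz Hl Hp Hq Hpq).
  rewrite Rpower_mult in Y.
  assert (0 < Rpower l q) by apply Rpower_pos.
  assert (rpow z q / (q * Rpower l q) <= convexity_profile u d al m A B x / (q * Rpower l q)).
  { apply Rmult_le_compat_r; [left; apply Rinv_0_lt_compat; nra|exact Hprof]. }
  lra.
Qed.

End YoungMajorant.

Lemma holder_constant_rearranged d th p q X : 0 < d -> 0 < th -> 1 < p -> 1 < q ->
  1 / p + 1 / q = 1 -> 0 <= X ->
  Rpower (Rpower d (th * p + 1) / (th * p + 1)) (1 / p) * rpow (d * X) (1 / q)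
  = Rpower d th * d * Rpower (1 / (th * p + 1)) (1 / p) * rpow X (1 / q).
Proof.
  intros Hd Hth Hp Hq Hpq HX.
  replace (Rpower d (th * p + 1) / (th * p + 1)) with (Rpower d (th * p + 1) * (1 / (th * p + 1)))
    by (field; nra).
  rewrite <- Rpower_mult_distr by (try apply Rpower_pos; apply Rdiv_lt_0_compat; nra).
  rewrite rpow_mult_l by (try assert (0 < 1 / q) by (apply Rdiv_lt_0_compat; lra); lra).
  rewrite Rpower_mult.
  assert (E : Rpower d ((th * p + 1) * (1 / p)) * Rpower d (1 / q) = Rpower d th * d).
  { rewrite <- Rpower_plus.
    replace ((th * p + 1) * (1 / p) + 1 / q) with (th + 1)
      by (replace ((th * p + 1) * (1 / p)) with (th + 1 / p) by (field; lra); lra).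
    rewrite Rpower_plus, Rpower_1 by lra. reflexivity. }
  rewrite <- E. ring.
Qed.

Theorem half_interval_estimate (F F' : R -> R) (u c c' th al m A B p q : R) :
  u < c -> c < c' -> 0 < th -> 0 <= al -> 0 < m -> 0 <= A -> 0 <= B ->
  1 < p -> 1 < q -> 1 / p + 1 / q = 1 ->
  (forall x, u <= x <= c' -> derivable_pt_lim F x (F' x)) ->
  (forall x, u < x <= c -> rpow (Rabs (F' x)) q <= convexity_profile u (c - u) al m A B x) ->
  exists L, is_imp_lo (fun s => rpow (s - u) (th - 1) * F s) u c L /\
    Rabs (Rpower (c - u) th * F c - th * L)
    <= Rpower (c - u) th * (c - u) * Rpower (1 / (th * p + 1)) (1 / p) *
       rpow ((A + al * m * B) / (al + 1)) (1 / q).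
Proof.
  intros Huc Hcc Hth Hal Hm HA HB Hp Hq Hpq HF Hconv.
  set (d := c - u). assert (Hd : 0 < d) by (unfold d; lra).
  assert (HX : 0 <= (A + al * m * B) / (al + 1)).
  { apply Rdiv_le_0_compat; [|lra].
    assert (0 <= al * m * B) by (apply Rmult_le_pos; [apply Rmult_le_pos|]; lra). lra. }
  destruct (weighted_improper_exists F F' u c c' th Huc Hcc Hth HF) as [L HL].
  exists L. split; [exact HL|].
  rewrite <- holder_constant_rearranged by auto.
  apply le_of_young_family; auto.
  - apply Rdiv_lt_0_compat; [apply Rpower_pos|nra].
  - replace (d * ((A + al * m * B) / (al + 1))) with (d * (A + al * m * B) / (al + 1))
      by (field; lra).
    apply Rdiv_le_0_compat; [|lra]. apply Rmult_le_pos; [lra|].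
    assert (0 <= al * m * B) by (apply Rmult_le_pos; [apply Rmult_le_pos|]; lra). lra.
  - intros l Hl. assert (0 < Rpower l q) by apply Rpower_pos.
    replace (d * ((A + al * m * B) / (al + 1))) with (d * (A + al * m * B) / (al + 1))
      by (field; lra).
    replace (c - u) with d by reflexivity.
    rewrite <- (Rminus_0_r (_ + _)), <- (young_majorant_end u d th p q al m A B l) by (auto; nra).
    replace (u + d) with c by (unfold d; ring).
    apply (weighted_comparison F F' u c c' th Huc Hcc Hth HF _
             (fun x => Rpower l p * Rpower (x - u) (th * p) / p
                       + convexity_profile u d al m A B x / (q * Rpower l q))).
    + intros x Hx. apply young_majorant_derive; auto. lra.
    + intros x Hx. assert (0 < Rpower (x - u) th) by apply Rpower_pos.
      rewrite Rabs_mult, (Rabs_pos_eq (Rpower (x - u) th)) by lra.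
      apply young_majorant_dominates; auto; try apply Rabs_pos; lra.
    + intros eps Heps. apply young_majorant_start; auto.
    + exact HL.
Qed.

Lemma interior_mem (I : R -> Prop) x : interior I x -> I x.
Proof.
  intros [d Hd]. apply Hd. unfold disc. rewrite Rminus_diag, Rabs_R0. apply cond_pos.
Qed.

Lemma interior_pos (I : R -> Prop) x : (forall y, I y -> 0 <= y) -> interior I x -> 0 < x.
Proof.
  intros HI0 [d Hd]. assert (Hdp := cond_pos d).
  assert (Ix : I (x - d / 2)).
  { apply Hd. unfold disc. replace (x - d / 2 - x) with (- (d / 2)) by ring.
    rewrite Rabs_Ropp, Rabs_pos_eq; lra. }
  assert (H := HI0 _ Ix). lra.
Qed.

Lemma interior_between (I : R -> Prop) x y z : is_interval I -> interior I x -> interior I z ->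
  x <= y <= z -> interior I y.
Proof.
  intros HI Hx Hz Hy.
  destruct (Req_dec y x) as [-> | N1]; [auto|].
  destruct (Req_dec y z) as [-> | N2]; [auto|].
  assert (Hp : 0 < Rmin (y - x) (z - y)) by (apply Rmin_glb_lt; lra).
  exists (mkposreal _ Hp). intros w Hw. unfold disc in Hw. simpl in Hw.
  assert (H1 := Rmin_l (y - x) (z - y)). assert (H2 := Rmin_r (y - x) (z - y)).
  apply (HI x w z); [apply interior_mem; auto|apply interior_mem; auto|split_Rabs; lra].
Qed.

Lemma am_convex_profile alpha m (K : R -> Prop) g X Y u d x :
  am_convex alpha m K g -> K X -> K Y -> 0 < d -> u < x <= u + d ->
  K ((x - u) / d * X + m * (1 - (x - u) / d) * Y) ->
  g ((x - u) / d * X + m * (1 - (x - u) / d) * Y) <= convexity_profile u d alpha m (g X) (g Y) x.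
Proof.
  intros Hconv HX HY Hd Hx HK.
  assert (Ht : 0 < (x - u) / d <= 1).
  { split; [apply Rdiv_lt_0_compat; lra|].
    apply (Rmult_le_reg_r d); [lra|]. unfold Rdiv. rewrite Rmult_assoc, Rinv_l; lra. }
  unfold convexity_profile. rewrite <- rpow_of_pos by lra.
  apply Hconv; auto. lra.
Qed.

Lemma conjugate_exponent q : 1 < q -> 1 < q / (q - 1) /\ 1 / (q / (q - 1)) + 1 / q = 1.
Proof.
  intro Hq. split.
  - apply (Rmult_lt_reg_r (q - 1)); [lra|]. unfold Rdiv. rewrite Rmult_assoc, Rinv_l; lra.
  - field. lra.
Qed.

Section MidpointSetting.

Variables (I : R -> Prop) (f f' : R -> R) (m alpha a b q theta : R).
Hypotheses (HI : is_interval I) (HI0 : forall x, I x -> 0 <= x)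
  (Hder : forall x, interior I x -> derivable_pt_lim f x (f' x))
  (Hm : 0 < m <= 1) (Hal : 0 <= alpha <= 1) (Hab : a < b)
  (Hma : interior I (m * a)) (Hb : interior I b)
  (Hconv : am_convex alpha m (fun x => m * a <= x <= b) (fun x => rpow (Rabs (f' x)) q))
  (Hq : 1 < q) (Hth : 0 < theta).

(* [a > 0] because [m a] is interior to a subset of [[0, +oo)]; the midpoint lies
   strictly inside [[m a, m b]]. *)
Lemma setting_order : 0 < a /\ m * b <= b /\ m * a < m * (a + b) / 2 < m * b.
Proof.
  assert (Hma0 := interior_pos I (m * a) HI0 Hma).
  assert (0 < a) by (destruct (Rle_lt_dec a 0); [nra|auto]). repeat split; nra.
Qed.

(* [f] is differentiable on all of [[m a, b]], whose points are interior to [I]. *)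
Lemma f_derivable x : m * a <= x <= b -> derivable_pt_lim f x (f' x).
Proof. intro Hx. apply Hder, (interior_between I (m * a) x b); auto. Qed.

(* The left half [[m a, c]], [c = m (a + b) / 2]: convexity between [c] and [a]. *)
Lemma left_half_estimate : exists L,
  is_imp_lo (fun s => rpow (s - m * a) (theta - 1) * f s) (m * a) (m * (a + b) / 2) L /\
  Rabs (Rpower (m * (b - a) / 2) theta * f (m * (a + b) / 2) - theta * L)
  <= Rpower (m * (b - a) / 2) theta * (m * (b - a) / 2) *
     Rpower (1 / (theta * (q / (q - 1)) + 1)) (1 / (q / (q - 1))) *
     rpow ((rpow (Rabs (f' (m * (a + b) / 2))) q + alpha * m * rpow (Rabs (f' a)) q)
           / (alpha + 1)) (1 / q).
Proof.
  destruct setting_order as (Ha & Hmb & Hc1 & Hc2).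
  destruct (conjugate_exponent q Hq) as [Hp Hpq].
  replace (m * (b - a) / 2) with (m * (a + b) / 2 - m * a) by field.
  apply half_interval_estimate with (F' := f') (c' := b); try apply rpow_nonneg; try lra.
  - intros x Hx. apply f_derivable. lra.
  - intros x Hx.
    replace x with ((x - m * a) / (m * (a + b) / 2 - m * a) * (m * (a + b) / 2)
                    + m * (1 - (x - m * a) / (m * (a + b) / 2 - m * a)) * a) at 1 by (field; lra).
    apply (am_convex_profile alpha m (fun x => m * a <= x <= b) (fun x => rpow (Rabs (f' x)) q)
             (m * (a + b) / 2) a); auto; try (simpl; nra).
    simpl. replace ((x - m * a) / (m * (a + b) / 2 - m * a) * (m * (a + b) / 2)
                    + m * (1 - (x - m * a) / (m * (a + b) / 2 - m * a)) * a) with x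
      by (field; lra). lra.
Qed.

(* The right half [[c, m b]], reflected onto a left half: convexity between [c] and [b]. *)
Lemma right_half_estimate : exists L,
  is_imp_hi (fun s => rpow (m * b - s) (theta - 1) * f s) (m * (a + b) / 2) (m * b) L /\
  Rabs (Rpower (m * (b - a) / 2) theta * f (m * (a + b) / 2) - theta * L)
  <= Rpower (m * (b - a) / 2) theta * (m * (b - a) / 2) *
     Rpower (1 / (theta * (q / (q - 1)) + 1)) (1 / (q / (q - 1))) *
     rpow ((rpow (Rabs (f' (m * (a + b) / 2))) q + alpha * m * rpow (Rabs (f' b)) q)
           / (alpha + 1)) (1 / q).
Proof.
  destruct setting_order as (Ha & Hmb & Hc1 & Hc2).
  destruct (conjugate_exponent q Hq) as [Hp Hpq].
  set (c := m * (a + b) / 2) in *.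
  assert (Ec : 2 * c = m * a + m * b) by (unfold c; field).
  set (F := fun x => f (c + m * b - x)).
  destruct (half_interval_estimate F (fun x => - f' (c + m * b - x)) c (m * b) (m * b + (m * b - c))
              theta alpha m (rpow (Rabs (f' c)) q) (rpow (Rabs (f' b)) q) (q / (q - 1)) q)
    as [L [HL Bound]]; try apply rpow_nonneg; try lra.
  - intros x Hx. unfold F. eapply derivable_pt_lim_eq.
    + apply (derivable_pt_lim_comp (fun x => c + m * b - x) f x (-1)).
      * apply is_derive_Reals. auto_derive; auto; ring.
      * apply f_derivable. lra.
    + ring.
  - intros x Hx. rewrite Rabs_Ropp.
    replace (c + m * b - x) with ((x - c) / (m * b - c) * c + m * (1 - (x - c) / (m * b - c)) * b)
      at 1 by (field; lra).
    apply (am_convex_profile alpha m (fun x => m * a <= x <= b) (fun x => rpow (Rabs (f' x)) q)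
             c b); auto; try (simpl; nra).
    simpl. replace ((x - c) / (m * b - c) * c + m * (1 - (x - c) / (m * b - c)) * b)
      with (c + m * b - x) by (field; lra). lra.
  - exists L. split.
    + apply (is_imp_hi_of_reflection (fun s => rpow (s - c) (theta - 1) * F s)); [lra| |exact HL].
      intro x. unfold F. replace (m * b - (c + m * b - x)) with (x - c) by ring. reflexivity.
    + replace (m * (b - a) / 2) with (m * b - c) by (unfold c; field).
      unfold F in Bound. replace (c + m * b - m * b) with c in Bound by ring. exact Bound.
Qed.

End MidpointSetting.

Lemma fractional_constant m a b th : 0 < m -> a < b -> 0 < th ->
  Gamma (th + 1) = th * Gamma th ->
  Gamma (th + 1) * rpow 2 (th - 1) / (rpow m th * rpow (b - a) th)
  = th * Gamma th / (2 * Rpower (m * (b - a) / 2) th).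
Proof.
  intros Hm Hab Hth HG. rewrite HG, !rpow_of_pos by lra.
  rewrite Rpower_mult_distr, Rpower_pred by nra.
  replace (Rpower (m * (b - a)) th) with (Rpower 2 th * Rpower (m * (b - a) / 2) th)
    by (rewrite Rpower_mult_distr by nra; f_equal; field).
  assert (0 < Rpower 2 th) by apply Rpower_pos.
  assert (0 < Rpower (m * (b - a) / 2) th) by apply Rpower_pos.
  field. lra.
Qed.

Lemma midpoint_average fc L1 L2 G D d th R S1 S2 : 0 < G -> 0 < D ->
  Rabs (D * fc - th * L1) <= D * d * R * S1 ->
  Rabs (D * fc - th * L2) <= D * d * R * S2 ->
  Rabs (fc - th * G / (2 * D) * (/ G * L1 + / G * L2)) <= 2 * d / 4 * R * (S1 + S2).
Proof.
  intros HG HD B1 B2.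
  replace (fc - th * G / (2 * D) * (/ G * L1 + / G * L2))
    with (((D * fc - th * L1) + (D * fc - th * L2)) * / (2 * D)) by (field; lra).
  rewrite Rabs_mult, (Rabs_pos_eq (/ (2 * D))) by (left; apply Rinv_0_lt_compat; lra).
  apply Rle_trans with ((D * d * R * S1 + D * d * R * S2) * / (2 * D)).
  - apply Rmult_le_compat_r; [left; apply Rinv_0_lt_compat; lra|].
    apply Rle_trans with (Rabs (D * fc - th * L1) + Rabs (D * fc - th * L2));
      [apply Rabs_triang|lra].
  - right. field. lra.
Qed.

Theorem mainTheorem12 (I : R -> Prop) (f f' : R -> R) (m alpha a b q theta : R) :
  is_interval I ->
  (forall x, I x -> 0 <= x) ->
  (forall x, interior I x -> derivable_pt_lim f x (f' x)) ->
  0 < m <= 1 ->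
  0 <= alpha <= 1 ->
  a < b ->
  interior I (m * a) ->
  interior I b ->
  am_convex alpha m (fun x => m * a <= x <= b) (fun x => rpow (Rabs (f' x)) q) ->
  1 < q ->
  0 < theta ->
  let p := q / (q - 1) in
  let c := m * (a + b) / 2 in
  Rabs (f c - Gamma (theta + 1) * rpow 2 (theta - 1) / (rpow m theta * rpow (b - a) theta)
                * (J_left theta f c (m * a) + J_right theta f c (m * b)))
  <= m * (b - a) / 4 * rpow (1 / (theta * p + 1)) (1 / p) *
     ( rpow ((rpow (Rabs (f' c)) q + alpha * m * rpow (Rabs (f' a)) q) / (alpha + 1)) (1 / q)
     + rpow ((rpow (Rabs (f' c)) q + alpha * m * rpow (Rabs (f' b)) q) / (alpha + 1)) (1 / q) ).
Proof.
  intros HI HI0 Hder Hm Hal Hab Hma Hb Hconv Hq Hth p c. subst p c.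
  destruct (setting_order I m a b HI0 Hm Hab Hma) as (Ha & _ & Hc1 & Hc2).
  destruct (left_half_estimate I f f' m alpha a b q theta) as [L1 [HL1 B1]]; auto.
  destruct (right_half_estimate I f f' m alpha a b q theta) as [L2 [HL2 B2]]; auto.
  destruct (Gamma_succ theta Hth) as [HGs HGpos].
  unfold J_left, J_right.
  rewrite (imp_lo_value _ _ _ L1 Hc1 HL1), (imp_hi_value _ _ _ L2 Hc2 HL2).
  rewrite fractional_constant by (auto; lra).
  destruct (conjugate_exponent q Hq) as [Hp _].
  rewrite (rpow_of_pos (1 / (theta * (q / (q - 1)) + 1))) by (apply Rdiv_lt_0_compat; nra).
  replace (m * (b - a) / 4) with (2 * (m * (b - a) / 2) / 4) by field.
  apply midpoint_average; auto. apply Rpower_pos.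
Qed.
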